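(* Fix integers $1\le k\le n$, a graph $G$ on $n$ vertices, and $\alpha\in\mathbb{R}$. Then $A^{\circ\alpha}$ is positive semidefinite for all $A\in\mathcal{C}_n^k([0,\infty))$ if and only if $A^{\circ\alpha}$ is positive semidefinite for all $A\in\mathcal{P}_n^k([0,\infty))$; and $A^{\circ\alpha}\in\mathcal{P}_G$ for all $A\in\mathcal{C}_G([0,\infty))$ if and only if $A^{\circ\alpha}\in\mathcal{P}_G$ for all $A\in\mathcal{P}_G([0,\infty))$. The analogous equivalences hold for $f=\phi_\alpha$ and $f=\psi_\alpha$ applied entrywise, with $\mathcal{C}_n^k(\mathbb{R})$, $\mathcal{P}_n^k(\mathbb{R})$, $\mathcal{C}_G(\mathbb{R})$, $\mathcal{P}_G(\mathbb{R})$ in place of the sets with entries in $[0,\infty)$.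
   Context: For $I\subset\mathbb{R}$, $\mathcal{P}_n(I)$ is the set of real symmetric PSD $n\times n$ matrices with entries in $I$, and $\mathcal{P}_n^k(I)$ those of rank at most $k$. For a graph $G$ on $\{1,\dots,n\}$, $\mathcal{P}_G(I)$ is the set of matrices in $\mathcal{P}_n(I)$ with $a_{ij}=0$ whenever $i\neq j$ and $(i,j)$ is not an edge; $\mathcal{P}_G=\mathcal{P}_G(\mathbb{R})$. A correlation matrix is a PSD matrix with all diagonal entries equal to $1$; $\mathcal{C}_n^k(I)$ and $\mathcal{C}_G(I)$ denote the sets of correlation matrices in $\mathcal{P}_n^k(I)$ and $\mathcal{P}_G(I)$ respectively. $A^{\circ\alpha}=(a_{ij}^\alpha)$ with $0^\alpha:=0$; $\psi_\alpha(x)=\mathrm{sgn}(x)|x|^\alpha$, $\phi_\alpha(x)=|x|^\alpha$ ($x\ne0$), $\psi_\alpha(0)=\phi_\alpha(0)=0$, applied entrywise. *)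

From HB Require Import structures.
From mathcomp Require Import all_boot all_order all_algebra.
From mathcomp Require Import all_classical all_reals all_analysis.
Set Implicit Arguments. Unset Strict Implicit. Unset Printing Implicit Defensive.
Import Order.TTheory GRing.Theory Num.Theory.
Local Open Scope ring_scope.

Definition psd (R : realType) (n : nat) (A : 'M[R]_n) : Prop :=
  A^T = A /\ forall v : 'cV[R]_n, 0 <= (v^T *m A *m v) 0 0.

Definition entries_in (R : realType) (n : nat) (I : pred R) (A : 'M[R]_n) : Prop :=
  forall i j, I (A i j).

Definition unit_diag (R : realType) (n : nat) (A : 'M[R]_n) : Prop :=
  forall i, A i i = 1.

Definition Pnk (R : realType) (n k : nat) (I : pred R) (A : 'M[R]_n) : Prop :=
  [/\ psd A, entries_in I A & (\rank A <= k)%N].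

Definition Cnk (R : realType) (n k : nat) (I : pred R) (A : 'M[R]_n) : Prop :=
  Pnk k I A /\ unit_diag A.

Definition G_pattern (R : realType) (n : nat) (G : rel 'I_n) (A : 'M[R]_n) : Prop :=
  forall i j, i != j -> ~~ G i j -> A i j = 0.

Definition PG (R : realType) (n : nat) (G : rel 'I_n) (I : pred R) (A : 'M[R]_n) : Prop :=
  [/\ psd A, entries_in I A & G_pattern G A].

Definition CG (R : realType) (n : nat) (G : rel 'I_n) (I : pred R) (A : 'M[R]_n) : Prop :=
  PG G I A /\ unit_diag A.

Definition nonneg (R : realType) : pred R := fun x => 0 <= x.
Definition allR (R : realType) : pred R := predT.

(* x^alpha with the convention 0^alpha := 0 (used for x >= 0). *)
Definition powz (R : realType) (alpha x : R) : R :=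
  if x == 0 then 0 else powR x alpha.

Definition phi (R : realType) (alpha x : R) : R :=
  if x == 0 then 0 else powR `|x| alpha.

Definition psi (R : realType) (alpha x : R) : R :=
  if x == 0 then 0 else Num.sg x * powR `|x| alpha.

Definition entrywise (R : realType) (n : nat) (f : R -> R) (A : 'M[R]_n) : 'M[R]_n :=
  map_mx f A.

From HB Require Import structures.
From mathcomp Require Import all_boot all_order all_algebra.
From mathcomp Require Import all_classical all_reals all_analysis.
From mathcomp Require Import ring lra.
Import Order.TTheory GRing.Theory Num.Theory.
Local Open Scope ring_scope.

(* Each of the maps f = x^alpha, phi_alpha, psi_alpha satisfies f 0 = 0 and
   f (a x b) = f a * f x * f b for a, b > 0. A PSD matrix A equals D C D on the
   indices where A_ii > 0, with D = diag (sqrt A_ii) and C the diagonal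
   normalization of A, while the rows and columns with A_ii = 0 vanish. C is
   turned into a correlation matrix either by copying the row and column of an
   index with positive diagonal into the vanishing ones, which does not
   increase the rank, or by putting 1 on the vanishing diagonal entries, which
   keeps the zero pattern. Then f[A] = f[D] f[C] f[D] is PSD as soon as f[C]
   is. *)

Set Implicit Arguments. Unset Strict Implicit.

Section PSD.
Variable R : realType.

Lemma psd_sym n (A : 'M[R]_n) i j : psd A -> A j i = A i j.
Proof. by case=> hs _; rewrite -[in LHS]hs mxE. Qed.

Lemma psd_congr n m (A : 'M[R]_n) (X : 'M[R]_(n, m)) : psd A -> psd (X^T *m A *m X).
Proof.
case=> hs hq; split; first by rewrite !trmx_mul trmxK hs mulmxA.
by move=> v; have := hq (X *m v); rewrite trmx_mul !mulmxA.
Qed.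

Lemma psd_add n (A B : 'M[R]_n) : psd A -> psd B -> psd (A + B).
Proof.
case=> hsA hqA [hsB hqB]; split; first by rewrite linearD /= hsA hsB.
by move=> v; rewrite mulmxDr mulmxDl mxE addr_ge0.
Qed.

Lemma psd0 n : psd (0 : 'M[R]_n).
Proof. by split=> [|v]; rewrite ?trmx0 // mulmx0 mul0mx mxE. Qed.

Lemma psd_diag_mx n (z : 'rV[R]_n) : (forall i, 0 <= z 0 i) -> psd (diag_mx z).
Proof.
move=> hz; split=> [|v]; first by rewrite tr_diag_mx.
rewrite mul_mx_diag mxE; apply: sumr_ge0 => i _.
by rewrite !mxE mulrAC -expr2 mulr_ge0 ?sqr_ge0.
Qed.

Lemma psd_form2 n (A : 'M[R]_n) (x y : R) i j : psd A ->
  0 <= x ^+ 2 * A i i + 2 * x * y * A i j + y ^+ 2 * A j j.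
Proof.
move=> hA; pose v : 'cV[R]_n := x *: delta_mx i 0 + y *: delta_mx j 0.
have vT : v^T = x *: delta_mx 0 i + y *: delta_mx 0 j.
  by rewrite /v linearD !linearZ /= !trmx_delta.
have := (proj2 hA) v; rewrite vT /v.
rewrite !mulmxDl !mulmxDr -!scalemxAl -!scalemxAr -!rowE -!colE !mxE.
rewrite (psd_sym i j hA).
by congr (0 <= _); ring.
Qed.

Lemma psd_diag_ge0 n (A : 'M[R]_n) i : psd A -> 0 <= A i i.
Proof. by move=> /(psd_form2 1 0 i i); congr (0 <= _); ring. Qed.

Lemma psd_diag_eq0 n (A : 'M[R]_n) i : psd A -> ~~ (0 < A i i) -> A i i = 0.
Proof. by move=> hA; rewrite lt_def psd_diag_ge0 // andbT negbK => /eqP. Qed.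

(* If A_ij != 0, the form at x e_i + e_j with x = -(A_jj + 1) / (2 A_ij) is -1. *)
Lemma psd_row_eq0 n (A : 'M[R]_n) i j : psd A -> A i i = 0 -> A i j = 0.
Proof.
move=> hA hAii; apply/eqP/negPn/negP => hAij.
have := psd_form2 (- (A j j + 1) / (2 * A i j)) 1 i j hA.
rewrite hAii mulr0 add0r expr1n mul1r mulr1.
have -> : 2 * (- (A j j + 1) / (2 * A i j)) * A i j = - (A j j + 1).
  by field; rewrite hAij.
lra.
Qed.

Lemma psd_col_eq0 n (A : 'M[R]_n) i j : psd A -> A j j = 0 -> A i j = 0.
Proof. by move=> hA /(psd_row_eq0 i hA); rewrite psd_sym. Qed.

Lemma mxsubEmul m n (f : 'I_m -> 'I_n) (A : 'M[R]_n) :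
  mxsub f f A = (colsub f 1%:M)^T *m A *m colsub f 1%:M.
Proof.
rewrite trmx_mxsub trmx1 mul_rowsub_mx mul1mx mulmx_colsub mulmx1.
by apply/matrixP=> i j; rewrite !mxE.
Qed.

Lemma psd_mxsub m n (f : 'I_m -> 'I_n) (A : 'M[R]_n) : psd A -> psd (mxsub f f A).
Proof. by rewrite mxsubEmul; apply: psd_congr. Qed.

Lemma mxrank_mxsub m n (f : 'I_m -> 'I_n) (A : 'M[R]_n) : (\rank (mxsub f f A) <= \rank A)%N.
Proof. by rewrite mxsubEmul (leq_trans (mxrankM_maxl _ _)) ?mxrankM_maxr. Qed.

Definition diag_scale n (e : 'rV[R]_n) (A : 'M[R]_n) : 'M[R]_n :=
  \matrix_(i, j) (e 0 i * A i j * e 0 j).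

Lemma diag_scaleEmul n (e : 'rV[R]_n) (A : 'M[R]_n) :
  diag_scale e A = (diag_mx e)^T *m A *m diag_mx e.
Proof.
rewrite tr_diag_mx mul_diag_mx mul_mx_diag.
by apply/matrixP=> i j; rewrite !mxE.
Qed.

Lemma psd_diag_scale n (e : 'rV[R]_n) (A : 'M[R]_n) : psd A -> psd (diag_scale e A).
Proof. by rewrite diag_scaleEmul; apply: psd_congr. Qed.

Lemma mxrank_diag_scale n (e : 'rV[R]_n) (A : 'M[R]_n) :
  (\rank (diag_scale e A) <= \rank A)%N.
Proof. by rewrite diag_scaleEmul (leq_trans (mxrankM_maxl _ _)) ?mxrankM_maxr. Qed.

Definition inv_sqrt_diag n (A : 'M[R]_n) : 'rV[R]_n :=
  \row_i (if 0 < A i i then (Num.sqrt (A i i))^-1 else 0).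

Definition diag_normalize n (A : 'M[R]_n) := diag_scale (inv_sqrt_diag A) A.

Lemma inv_sqrt_diag_ge0 n (A : 'M[R]_n) i : 0 <= inv_sqrt_diag A 0 i.
Proof. by rewrite mxE; case: ifP; rewrite ?invr_ge0 ?sqrtr_ge0. Qed.

Lemma diag_normalize_row0 n (A : 'M[R]_n) i j :
  ~~ (0 < A i i) -> diag_normalize A i j = 0.
Proof. by move=> /negPf hi; rewrite !mxE hi !mul0r. Qed.

Lemma diag_normalizeK n (A : 'M[R]_n) i j : 0 < A i i -> 0 < A j j ->
  A i j = Num.sqrt (A i i) * diag_normalize A i j * Num.sqrt (A j j).
Proof.
move=> hi hj; rewrite !mxE hi hj.
have := sqrtr_gt0 (A i i); have := sqrtr_gt0 (A j j); rewrite hi hj.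
by move=> /gt_eqF/negbT hsj /gt_eqF/negbT hsi; field; apply/andP.
Qed.

Lemma diag_normalize_diag n (A : 'M[R]_n) i : 0 < A i i -> diag_normalize A i i = 1.
Proof.
move=> hi; rewrite !mxE hi.
have hs : Num.sqrt (A i i) != 0 by rewrite gt_eqF ?sqrtr_gt0.
by rewrite -{2}(sqr_sqrtr (ltW hi)); field.
Qed.

Section Entrywise.
Variables (f : R -> R) (I : pred R).
Hypothesis f0 : f 0 = 0.
Hypothesis f_mul3 : forall a x b, 0 < a -> 0 < b -> I x -> f (a * x * b) = f a * f x * f b.
Hypothesis I_mul3 : forall a x b, 0 <= a -> 0 <= b -> I x -> I (a * x * b).
Hypothesis I_addr : forall x y, I x -> 0 <= y -> I (x + y).

Lemma entries_in_diag_normalize n (A : 'M[R]_n) :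
  entries_in I A -> entries_in I (diag_normalize A).
Proof. by move=> hI i j; rewrite mxE I_mul3 ?inv_sqrt_diag_ge0. Qed.

Lemma psd_entrywise_of_rescaled n (A C : 'M[R]_n) :
  psd A -> entries_in I C -> psd (entrywise f C) ->
  (forall i j, 0 < A i i -> 0 < A j j ->
     A i j = Num.sqrt (A i i) * C i j * Num.sqrt (A j j)) ->
  psd (entrywise f A).
Proof.
move=> hA hI hfC hAC; have := psd_diag_scale (\row_i f (Num.sqrt (A i i))) hfC.
congr psd; apply/matrixP=> i j; rewrite !mxE.
have [hi|/(psd_diag_eq0 hA) hi0] := boolP (0 < A i i); last first.
  by rewrite (psd_row_eq0 j hA hi0) hi0 sqrtr0 f0 !mul0r.
have [hj|/(psd_diag_eq0 hA) hj0] := boolP (0 < A j j); last first.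
  by rewrite (psd_col_eq0 i hA hj0) hj0 sqrtr0 f0 !mulr0.
by rewrite [A i j]hAC // f_mul3 ?sqrtr_gt0.
Qed.

Lemma psd_entrywise_Pnk n k :
  (forall C : 'M[R]_n, Cnk k I C -> psd (entrywise f C)) ->
  forall A : 'M[R]_n, Pnk k I A -> psd (entrywise f A).
Proof.
move=> hfC A [hA hI hr].
have [/existsP [p hp]|hn] := boolP [exists p, 0 < A p p]; last first.
  have -> : entrywise f A = 0; last exact: psd0.
  apply/matrixP=> i j; rewrite !mxE psd_row_eq0 ?f0 // psd_diag_eq0 //.
  by apply: contra hn => hi; apply/existsP; exists i.
(* rows and columns with zero diagonal are replaced by copies of those of p *)
pose pi i := if 0 < A i i then i else p.
have hpi i : 0 < A (pi i) (pi i) by rewrite /pi; case: ifP.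
pose C := mxsub pi pi (diag_normalize A).
have CE i j : 0 < A i i -> 0 < A j j -> C i j = diag_normalize A i j.
  by move=> hi hj; rewrite mxE /pi hi hj.
apply: (psd_entrywise_of_rescaled hA (C := C)).
- by move=> i j; rewrite mxE entries_in_diag_normalize.
- apply: hfC; split=> [|i]; last by rewrite mxE diag_normalize_diag.
  split.
  + exact/psd_mxsub/psd_diag_scale.
  + by move=> i j; rewrite mxE entries_in_diag_normalize.
  + exact: leq_trans (mxrank_mxsub _ _) (leq_trans (mxrank_diag_scale _ _) hr).
- by move=> i j hi hj; rewrite CE // -diag_normalizeK.
Qed.

Lemma PG_entrywise n (G : rel 'I_n) :
  (forall C : 'M[R]_n, CG G I C -> PG G (@allR R) (entrywise f C)) ->
  forall A : 'M[R]_n, PG G I A -> PG G (@allR R) (entrywise f A).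
Proof.
move=> hfC A [hA hI hG]; split=> //; last first.
  by move=> i j hij hGij; rewrite mxE hG // f0.
pose z : 'rV[R]_n := \row_i (if 0 < A i i then 0 else 1).
have z_ge0 i : 0 <= z 0 i by rewrite mxE; case: ifP.
pose C := diag_normalize A + diag_mx z.
have CE i j : C i j = diag_normalize A i j + z 0 i *+ (i == j) by rewrite !mxE.
have hIC : entries_in I C.
  by move=> i j; rewrite CE I_addr ?entries_in_diag_normalize ?mulrn_wge0.
have hCG : CG G I C.
  split; last first.
    move=> i; rewrite CE eqxx mulr1n [z 0 i]mxE.
    case: ifPn => hi; first by rewrite diag_normalize_diag ?addr0.
    by rewrite diag_normalize_row0 ?add0r.
  split=> //; first by apply: psd_add; [apply: psd_diag_scale | apply: psd_diag_mx].
  by move=> i j hij hGij; rewrite CE (negbTE hij) mulr0n addr0 mxE hG // mulr0 mul0r.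
apply: (psd_entrywise_of_rescaled hA hIC); first by case: (hfC C hCG).
by move=> i j hi hj; rewrite CE [z 0 i]mxE hi mul0rn addr0 -diag_normalizeK.
Qed.

Lemma psd_entrywise_Cnk_Pnk n k :
  (forall C : 'M[R]_n, Cnk k I C -> psd (entrywise f C)) <->
  (forall A : 'M[R]_n, Pnk k I A -> psd (entrywise f A)).
Proof. by split=> [|h A []]; [apply: psd_entrywise_Pnk | move=> /h]. Qed.

Lemma PG_entrywise_CG_PG n (G : rel 'I_n) :
  (forall C : 'M[R]_n, CG G I C -> PG G (@allR R) (entrywise f C)) <->
  (forall A : 'M[R]_n, PG G I A -> PG G (@allR R) (entrywise f A)).
Proof. by split=> [|h A []]; [apply: PG_entrywise | move=> /h]. Qed.

End Entrywise.

End PSD.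

Section PowerMaps.
Variable R : realType.

Lemma mul3_eq0 (a x b : R) : 0 < a -> 0 < b -> (a * x * b == 0) = (x == 0).
Proof. by move=> ha hb; rewrite !mulf_eq0 (gt_eqF ha) (gt_eqF hb) orbF. Qed.

Lemma nonneg_mul3 (a x b : R) : 0 <= a -> 0 <= b -> nonneg x -> nonneg (a * x * b).
Proof. by rewrite /nonneg => ha hb hx; rewrite !mulr_ge0. Qed.

Lemma nonneg_addr (x y : R) : nonneg x -> 0 <= y -> nonneg (x + y).
Proof. by rewrite /nonneg => hx hy; rewrite addr_ge0. Qed.

Variable alpha : R.

Lemma powz0 : powz alpha 0 = 0. Proof. by rewrite /powz eqxx. Qed.
Lemma phi0 : phi alpha 0 = 0. Proof. by rewrite /phi eqxx. Qed.
Lemma psi0 : psi alpha 0 = 0. Proof. by rewrite /psi eqxx. Qed.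

Lemma powz_mul3 (a x b : R) : 0 < a -> 0 < b -> nonneg x ->
  powz alpha (a * x * b) = powz alpha a * powz alpha x * powz alpha b.
Proof.
rewrite /nonneg /powz => ha hb hx; rewrite mul3_eq0 // (gt_eqF ha) (gt_eqF hb).
case: eqP => _; first by rewrite mulr0 mul0r.
by rewrite !powRM ?mulr_ge0 ?(ltW ha) ?(ltW hb).
Qed.

Lemma phi_mul3 (a x b : R) : 0 < a -> 0 < b -> allR x ->
  phi alpha (a * x * b) = phi alpha a * phi alpha x * phi alpha b.
Proof.
move=> ha hb _; rewrite /phi mul3_eq0 // (gt_eqF ha) (gt_eqF hb).
case: eqP => _; first by rewrite mulr0 mul0r.
by rewrite !normrM (gtr0_norm ha) (gtr0_norm hb) !powRM ?mulr_ge0 ?(ltW ha) ?(ltW hb).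
Qed.

Lemma psi_mul3 (a x b : R) : 0 < a -> 0 < b -> allR x ->
  psi alpha (a * x * b) = psi alpha a * psi alpha x * psi alpha b.
Proof.
move=> ha hb _; rewrite /psi mul3_eq0 // (gt_eqF ha) (gt_eqF hb).
case: eqP => _; first by rewrite mulr0 mul0r.
rewrite !normrM (gtr0_norm ha) (gtr0_norm hb) !powRM ?mulr_ge0 ?(ltW ha) ?(ltW hb) //.
by rewrite !sgrM (gtr0_sg ha) (gtr0_sg hb); ring.
Qed.

End PowerMaps.

Unset Implicit Arguments.
Theorem proposition4p15 (R : realType) (n k : nat) (G : rel 'I_n) (alpha : R)
  (hk1 : (1 <= k)%N) (hkn : (k <= n)%N)
  (Gsym : symmetric G) (Girr : irreflexive G) :
  (* A^{o alpha}, entries in [0, oo) *)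
  ((forall A : 'M[R]_n, Cnk k (@nonneg R) A -> psd (entrywise (powz alpha) A)) <->
   (forall A : 'M[R]_n, Pnk k (@nonneg R) A -> psd (entrywise (powz alpha) A))) /\
  ((forall A : 'M[R]_n, CG G (@nonneg R) A -> PG G (@allR R) (entrywise (powz alpha) A)) <->
   (forall A : 'M[R]_n, PG G (@nonneg R) A -> PG G (@allR R) (entrywise (powz alpha) A))) /\
  (* phi_alpha, entries in R *)
  ((forall A : 'M[R]_n, Cnk k (@allR R) A -> psd (entrywise (phi alpha) A)) <->
   (forall A : 'M[R]_n, Pnk k (@allR R) A -> psd (entrywise (phi alpha) A))) /\
  ((forall A : 'M[R]_n, CG G (@allR R) A -> PG G (@allR R) (entrywise (phi alpha) A)) <->
   (forall A : 'M[R]_n, PG G (@allR R) A -> PG G (@allR R) (entrywise (phi alpha) A))) /\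
  (* psi_alpha, entries in R *)
  ((forall A : 'M[R]_n, Cnk k (@allR R) A -> psd (entrywise (psi alpha) A)) <->
   (forall A : 'M[R]_n, Pnk k (@allR R) A -> psd (entrywise (psi alpha) A))) /\
  ((forall A : 'M[R]_n, CG G (@allR R) A -> PG G (@allR R) (entrywise (psi alpha) A)) <->
   (forall A : 'M[R]_n, PG G (@allR R) A -> PG G (@allR R) (entrywise (psi alpha) A))).
Proof.
have allR_mul3 (a x b : R) : 0 <= a -> 0 <= b -> allR x -> allR (a * x * b) by [].
have allR_addr (x y : R) : allR x -> 0 <= y -> allR (x + y) by [].
split; first exact (psd_entrywise_Cnk_Pnk (powz0 alpha) (@powz_mul3 R alpha) (@nonneg_mul3 R) n k).
split; first exact (PG_entrywise_CG_PG (powz0 alpha) (@powz_mul3 R alpha)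
  (@nonneg_mul3 R) (@nonneg_addr R) G).
split; first exact (psd_entrywise_Cnk_Pnk (phi0 alpha) (@phi_mul3 R alpha) allR_mul3 n k).
split; first exact (PG_entrywise_CG_PG (phi0 alpha) (@phi_mul3 R alpha) allR_mul3 allR_addr G).
split; first exact (psd_entrywise_Cnk_Pnk (psi0 alpha) (@psi_mul3 R alpha) allR_mul3 n k).
exact (PG_entrywise_CG_PG (psi0 alpha) (@psi_mul3 R alpha) allR_mul3 allR_addr G).
Qed.
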